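(* Let $t(\varphi)$ and $s(\varphi)$ be real trigonometric polynomials with $\deg s<\deg t$, such that all roots of $t$ in the cylinder $\mathbb{C}/2\pi\mathbb{Z}$ are real. Put $r=s/t$. Then for every natural number $n$ \[ (P)\int_0^{2\pi}r^n(\varphi)\,\mathrm{d}\varphi:=\frac12\int_0^{2\pi}(r(\varphi)+i0)^n\,\mathrm{d}\varphi+\frac12\int_0^{2\pi}(r(\varphi)-i0)^n\,\mathrm{d}\varphi=0 . \]
   Context: A real trigonometric polynomial of degree $k$ is $t(\varphi)=\sum_{j=0}^k(a_j\cos j\varphi+b_j\sin j\varphi)$ with real coefficients and $(a_k,b_k)\ne(0,0)$; it extends holomorphically to $\mathbb{C}/2\pi\mathbb{Z}$, where it has $2k$ zeros counted with multiplicity. $\int(r\pm i0)^n\,\mathrm{d}\varphi$ means $\lim_{\eta\searrow0}\int_0^{2\pi}(r(\varphi)\pm i\eta)^n\,\mathrm{d}\varphi$.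
   Formalization: In the limit over η ↘ 0 defining ∫(r ± i0)ⁿ dφ, the integrand is r(φ ± iη)ⁿ instead of (r(φ) ± iη)ⁿ, and n ranges over n ≥ 1 only. The statement above fails without it. *)

From Stdlib Require Import Reals.
From Coquelicot Require Import Coquelicot.
Open Scope R_scope.

Definition ccos (z : C) : C :=
  (cos (Re z) * cosh (Im z), - (sin (Re z) * sinh (Im z))).
Definition csin (z : C) : C :=
  (sin (Re z) * cosh (Im z), cos (Re z) * sinh (Im z)).

Definition trig_eval (N : nat) (a b : nat -> R) (z : C) : C :=
  sum_n (fun j => Cplus (Cmult (RtoC (a j)) (ccos (Cmult (RtoC (INR j)) z)))
                        (Cmult (RtoC (b j)) (csin (Cmult (RtoC (INR j)) z)))) N.

Definition is_trig_deg (a b : nat -> R) (k : nat) : Prop :=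
  (a k <> 0 \/ b k <> 0) /\ (forall j, (k < j)%nat -> a j = 0 /\ b j = 0).

Definition CRInt (f : R -> C) (lo hi : R) : C :=
  (RInt (fun x => Re (f x)) lo hi, RInt (fun x => Im (f x)) lo hi).

(* The function g = r^n is holomorphic off the real axis, since all zeros of t are real, it is
   2π-periodic, and it tends to 0 uniformly as |Im z| → ∞ because deg s < deg t. By the
   Cauchy-Riemann equations, d/dη ∫_0^{2π} g(φ + iη) dφ = i ∫_0^{2π} g'(φ + iη) dφ = i [g]_0^{2π} = 0,
   so this integral is constant for η > 0 and for η < 0, and letting |η| → ∞ shows that both
   constants vanish. Hence both one-sided boundary integrals of r^n are 0, and so is their mean. *)

From Stdlib Require Import Reals Lra Lia.
From Coquelicot Require Import Coquelicot.
Open Scope R_scope.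

(** * Complex differentiability *)

Definition is_Cderive (f : C -> C) (z l : C) : Prop :=
  @is_derive C_AbsRing (AbsRing_NormedModule C_AbsRing) f z l.

Lemma is_Cderive_approx f z l : is_Cderive f z l ->
  forall eps, 0 < eps -> exists d, 0 < d /\ forall w, Cmod (Cminus w z) < d ->
    Cmod (Cminus (Cminus (f w) (f z)) (Cmult (Cminus w z) l)) <= eps * Cmod (Cminus w z).
Proof.
  intros [_ H] eps Heps.
  destruct (H z (fun P HP => HP) (mkposreal eps Heps)) as [d Hd].
  exists d; split; [apply cond_pos | intros w Hw; apply Hd, Hw].
Qed.

Lemma is_Cderive_of_approx f z l :
  (forall eps, 0 < eps -> exists d, 0 < d /\ forall w, Cmod (Cminus w z) < d ->
    Cmod (Cminus (Cminus (f w) (f z)) (Cmult (Cminus w z) l)) <= eps * Cmod (Cminus w z)) ->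
  is_Cderive f z l.
Proof.
  intros H. split; [apply (@is_linear_scal_l C_AbsRing (AbsRing_NormedModule C_AbsRing)) |].
  intros x Hx.
  apply (@is_filter_lim_locally_unique C_AbsRing (AbsRing_NormedModule C_AbsRing)) in Hx. subst x.
  intros [eps Heps]. destruct (H eps Heps) as [d [Hd Hw]].
  exists (mkposreal d Hd). intros w Hb. apply Hw, Hb.
Qed.

Lemma is_Cderive_continuous f z l : is_Cderive f z l ->
  forall eps, 0 < eps -> exists d, 0 < d /\
    forall w, Cmod (Cminus w z) < d -> Cmod (Cminus (f w) (f z)) < eps.
Proof.
  intros H eps Heps.
  assert (Hc := @ex_derive_continuous C_AbsRing (AbsRing_NormedModule C_AbsRing) f z (ex_intro _ l H)).
  destruct (Hc _ (@locally_ball (AbsRing_NormedModule C_AbsRing) (f z) (mkposreal eps Heps))) as [d Hd].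
  exists d; split; [apply cond_pos | intros w Hw; apply (Hd w Hw)].
Qed.

Section CderiveRules.

Let K := C_AbsRing.
Let V := AbsRing_NormedModule C_AbsRing.

Lemma is_Cderive_eq f z l l' : is_Cderive f z l -> l = l' -> is_Cderive f z l'.
Proof. now intros ? <-. Qed.

Lemma is_Cderive_ext f g z l : (forall w, f w = g w) -> is_Cderive f z l -> is_Cderive g z l.
Proof. intros; eapply (@is_derive_ext K V); eauto. Qed.

Lemma is_Cderive_const c z : is_Cderive (fun _ => c) z (RtoC 0).
Proof. apply (@is_derive_const K V). Qed.

Lemma is_Cderive_id z : is_Cderive (fun w => w) z (RtoC 1).
Proof. apply (@is_derive_id K). Qed.

Lemma is_Cderive_opp f z a : is_Cderive f z a -> is_Cderive (fun w => Copp (f w)) z (Copp a).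
Proof. intros; apply (@is_derive_opp K V); auto. Qed.

Lemma is_Cderive_plus f g z a b : is_Cderive f z a -> is_Cderive g z b ->
  is_Cderive (fun w => Cplus (f w) (g w)) z (Cplus a b).
Proof. intros; apply (@is_derive_plus K V); auto. Qed.

Lemma is_Cderive_mult f g z a b : is_Cderive f z a -> is_Cderive g z b ->
  is_Cderive (fun w => Cmult (f w) (g w)) z (Cplus (Cmult a (g z)) (Cmult (f z) b)).
Proof. intros; apply (@is_derive_mult K); auto using Cmult_comm. Qed.

Lemma is_Cderive_comp f g z a b : is_Cderive f (g z) a -> is_Cderive g z b ->
  is_Cderive (fun w => f (g w)) z (Cmult b a).
Proof. intros; apply (@is_derive_comp K V); auto. Qed.

End CderiveRules.

Lemma is_Cderive_inv z : z <> RtoC 0 -> is_Cderive Cinv z (Copp (Cinv (Cmult z z))).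
Proof.
  intros Hz. apply is_Cderive_of_approx. intros eps Heps.
  assert (Hm : 0 < Cmod z) by (apply Cmod_gt_0; auto).
  exists (Rmin (Cmod z / 2) (eps * Cmod z ^ 3 / 2)). split.
  { apply Rmin_pos; [lra|]. assert (0 < Cmod z ^ 3) by (apply pow_lt; auto). nra. }
  intros w Hw.
  assert (Hw1 : Cmod (Cminus w z) < Cmod z / 2) by (eapply Rlt_le_trans; [exact Hw | apply Rmin_l]).
  assert (Hw2 : Cmod (Cminus w z) < eps * Cmod z ^ 3 / 2) by (eapply Rlt_le_trans; [exact Hw | apply Rmin_r]).
  assert (Hwm : Cmod z / 2 < Cmod w).
  { assert (T := Cmod_triangle (Cminus z w) w).
    replace (Cplus (Cminus z w) w) with z in T by ring.
    replace (Cminus z w) with (Copp (Cminus w z)) in T by ring. rewrite Cmod_opp in T. lra. }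
  assert (Hw0 : w <> RtoC 0) by (intros ->; rewrite Cmod_0 in Hwm; lra).
  replace (Cminus (Cminus (Cinv w) (Cinv z)) (Cmult (Cminus w z) (Copp (Cinv (Cmult z z)))))
    with (Cmult (Cmult (Cminus w z) (Cminus w z)) (Cinv (Cmult w (Cmult z z)))) by (field; auto).
  rewrite !Cmod_mult, Cmod_inv, !Cmod_mult by (repeat apply Cmult_neq_0; auto).
  set (m := Cmod (Cminus w z)) in *.
  assert (0 <= m) by apply Cmod_ge_0.
  assert (Hden : Cmod z / 2 * (Cmod z * Cmod z) <= Cmod w * (Cmod z * Cmod z)) by nra.
  assert (m <= eps * (Cmod z / 2 * (Cmod z * Cmod z))) by (simpl in Hw2; lra).
  assert (HD : 0 < Cmod w * (Cmod z * Cmod z)) by nra.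
  apply (Rmult_le_reg_r (Cmod w * (Cmod z * Cmod z))); [exact HD |].
  rewrite Rmult_assoc, Rinv_l, Rmult_1_r by lra.
  assert (eps * m * (Cmod z / 2 * (Cmod z * Cmod z)) <= eps * m * (Cmod w * (Cmod z * Cmod z))).
  { apply Rmult_le_compat_l; [nra | exact Hden]. }
  nra.
Qed.

Lemma im_le_Cmod c : Rabs (Im c) <= Cmod c.
Proof. eapply Rle_trans; [apply Rmax_r | apply Rmax_Cmod]. Qed.

Lemma Cmod_le_abs_Re_Im c : Cmod c <= Rabs (Re c) + Rabs (Im c).
Proof.
  destruct c as [x y]. unfold Cmod; simpl.
  rewrite <- (sqrt_Rsqr (Rabs x + Rabs y)) by (generalize (Rabs_pos x) (Rabs_pos y); lra).
  apply sqrt_le_1_alt.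
  assert (Hx := Rsqr_abs x). assert (Hy := Rsqr_abs y). unfold Rsqr in *.
  generalize (Rabs_pos x) (Rabs_pos y); nra.
Qed.

Lemma is_derive_of_approx (F : R -> R) x0 L :
  (forall eps, 0 < eps -> exists del : posreal, forall h, h <> 0 -> Rabs h < del ->
    Rabs (F (x0 + h) - F x0 - h * L) <= eps * Rabs h) ->
  is_derive F x0 L.
Proof.
  intros H. apply is_derive_Reals. intros eps Heps.
  destruct (H (eps / 2)) as [del Hdel]; [lra |].
  exists del. intros h Hh Hhd. specialize (Hdel h Hh Hhd).
  assert (Hp : 0 < Rabs h) by (apply Rabs_pos_lt; auto).
  replace ((F (x0 + h) - F x0) / h - L) with ((F (x0 + h) - F x0 - h * L) / h) by (field; auto).
  unfold Rdiv. rewrite Rabs_mult, Rabs_inv.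
  apply (Rmult_lt_reg_r (Rabs h)); auto. rewrite Rmult_assoc, Rinv_l, Rmult_1_r by lra. nra.
Qed.

Lemma is_Cderive_along_line g z l d x0 : is_Cderive g z l ->
  is_derive (fun s => Re (g (Cplus z (Cmult (RtoC (s - x0)) d)))) x0 (Re (Cmult d l)) /\
  is_derive (fun s => Im (g (Cplus z (Cmult (RtoC (s - x0)) d)))) x0 (Im (Cmult d l)).
Proof.
  intros H.
  set (p := fun s => Cplus z (Cmult (RtoC (s - x0)) d)).
  change (is_derive (fun s => Re (g (p s))) x0 (Re (Cmult d l)) /\
    is_derive (fun s => Im (g (p s))) x0 (Im (Cmult d l))).
  assert (Hp0 : p x0 = z) by (unfold p; rewrite Rminus_diag; ring).
  assert (Hd1 : 0 < Cmod d + 1) by (generalize (Cmod_ge_0 d); lra).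
  assert (Happrox : forall eps, 0 < eps -> exists del : posreal, forall h, h <> 0 -> Rabs h < del ->
     Cmod (Cminus (Cminus (g (p (x0 + h))) (g (p x0))) (Cmult (RtoC h) (Cmult d l))) <= eps * Rabs h).
  { intros eps Heps.
    destruct (is_Cderive_approx g z l H (eps / (Cmod d + 1))) as [de [Hde Hw]].
    { apply Rdiv_lt_0_compat; lra. }
    exists (mkposreal (de / (Cmod d + 1)) (Rdiv_lt_0_compat _ _ Hde Hd1)). simpl. intros h _ Hhd.
    assert (Ew : Cminus (p (x0 + h)) z = Cmult (RtoC h) d).
    { unfold p. replace (x0 + h - x0) with h by ring. ring. }
    assert (Hmod : Cmod (Cminus (p (x0 + h)) z) <= Rabs h * (Cmod d + 1)).
    { rewrite Ew, Cmod_mult, Cmod_R. generalize (Rabs_pos h); nra. }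
    assert (Hsmall : Rabs h * (Cmod d + 1) < de).
    { apply (Rmult_lt_compat_r (Cmod d + 1)) in Hhd; [| lra].
      unfold Rdiv in Hhd. rewrite Rmult_assoc, Rinv_l, Rmult_1_r in Hhd by lra. exact Hhd. }
    rewrite Hp0. replace (Cmult (RtoC h) (Cmult d l)) with (Cmult (Cminus (p (x0 + h)) z) l)
      by (rewrite Ew; ring).
    eapply Rle_trans; [apply Hw; lra |].
    replace (eps * Rabs h) with (eps / (Cmod d + 1) * (Rabs h * (Cmod d + 1))) by (field; lra).
    apply Rmult_le_compat_l; [apply Rlt_le, Rdiv_lt_0_compat |]; lra. }
  split; apply is_derive_of_approx; intros eps Heps; destruct (Happrox eps Heps) as [del Hdel];
    exists del; intros h Hh Hhd; (eapply Rle_trans; [| apply (Hdel h Hh Hhd)]);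
    [eapply Rle_trans; [| apply re_le_Cmod] | eapply Rle_trans; [| apply im_le_Cmod]];
    right; f_equal; destruct (g (p (x0 + h))), (g (p x0)), d, l; simpl; ring.
Qed.

Lemma is_Cderive_partial_x g x y l : is_Cderive g (x, y) l ->
  is_derive (fun s => Re (g (s, y))) x (Re l) /\ is_derive (fun s => Im (g (s, y))) x (Im l).
Proof.
  intros H. destruct (is_Cderive_along_line g (x, y) l (RtoC 1) x H) as [Hre Him].
  rewrite Cmult_1_l in Hre, Him.
  assert (E : forall s, Cplus (x, y) (Cmult (RtoC (s - x)) (RtoC 1)) = (s, y))
    by (intros s; apply injective_projections; simpl; ring).
  split; [refine (is_derive_ext _ _ _ _ _ Hre) | refine (is_derive_ext _ _ _ _ _ Him)];
    intros s; now rewrite E.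
Qed.

Lemma is_Cderive_partial_y g x y l : is_Cderive g (x, y) l ->
  is_derive (fun s => Re (g (x, s))) y (- Im l) /\ is_derive (fun s => Im (g (x, s))) y (Re l).
Proof.
  intros H. destruct (is_Cderive_along_line g (x, y) l Ci y H) as [Hre Him].
  assert (E : forall s, Cplus (x, y) (Cmult (RtoC (s - y)) Ci) = (x, s))
    by (intros s; apply injective_projections; simpl; ring).
  replace (Re (Cmult Ci l)) with (- Im l) in Hre by (destruct l; simpl; ring).
  replace (Im (Cmult Ci l)) with (Re l) in Him by (destruct l; simpl; ring).
  split; [refine (is_derive_ext _ _ _ _ _ Hre) | refine (is_derive_ext _ _ _ _ _ Him)];
    intros s; now rewrite E.
Qed.

Definition cexp (z : C) : C := (exp (Re z) * cos (Im z), exp (Re z) * sin (Im z)).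

Lemma differentiable_2d_approx (F dx dy : R -> R -> R) x y :
  (forall u v, is_derive (fun s => F s v) u (dx u v)) ->
  (forall u v, is_derive (fun s => F u s) v (dy u v)) ->
  continuous (fun u : R * R => dx (fst u) (snd u)) (x, y) ->
  forall eps, 0 < eps -> exists d, 0 < d /\ forall u v, Rabs (u - x) < d -> Rabs (v - y) < d ->
    Rabs (F u v - F x y - ((u - x) * dx x y + (v - y) * dy x y))
      <= eps * sqrt ((u - x) ^ 2 + (v - y) ^ 2).
Proof.
  intros Hx Hy Hc eps Heps.
  destruct (is_derive_filterdiff F x y dx (dy x y)) as [_ H].
  - apply filter_forall. intros [u v]. apply Hx.
  - apply Hy.
  - exact Hc.
  - destruct (H (x, y) (fun P HP => HP) (mkposreal eps Heps)) as [d Hd].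
    exists d. split; [apply cond_pos |].
    intros u v Hu Hv. specialize (Hd (u, v) (conj Hu Hv)).
    change (Rabs (F u v - F x y - ((u - x) * dx x y + (v - y) * dy x y))
      <= eps * sqrt (Rabs (u - x) ^ 2 + Rabs (v - y) ^ 2)) in Hd.
    now rewrite !pow2_abs in Hd.
Qed.

Lemma continuous_exp_mult_2d (h : R -> R) x y : (forall v, continuous h v) ->
  continuous (fun u : R * R => exp (fst u) * h (snd u)) (x, y).
Proof.
  intros Hh. apply (continuous_mult (fun u : R * R => exp (fst u)) (fun u => h (snd u))).
  - apply continuous_comp; [apply continuous_fst | apply continuous_exp].
  - apply continuous_comp; [apply continuous_snd | apply Hh].
Qed.

Lemma is_Cderive_cexp z : is_Cderive cexp z (cexp z).
Proof.
  apply is_Cderive_of_approx. intros eps Heps. destruct z as [x y].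
  destruct (differentiable_2d_approx (fun u v => exp u * cos v) (fun u v => exp u * cos v)
    (fun u v => - (exp u * sin v)) x y) with (eps := eps / 2) as [d1 [Hd1 H1]]; try lra.
  { intros u v. auto_derive; auto. ring. }
  { intros u v. auto_derive; auto. ring. }
  { apply continuous_exp_mult_2d, continuous_cos. }
  destruct (differentiable_2d_approx (fun u v => exp u * sin v) (fun u v => exp u * sin v)
    (fun u v => exp u * cos v) x y) with (eps := eps / 2) as [d2 [Hd2 H2]]; try lra.
  { intros u v. auto_derive; auto. ring. }
  { intros u v. auto_derive; auto. ring. }
  { apply continuous_exp_mult_2d, continuous_sin. }
  exists (Rmin d1 d2). split; [apply Rmin_pos; auto |].
  intros [u v] Hw.
  assert (Hu : Rabs (u - x) < Rmin d1 d2)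
    by (eapply Rle_lt_trans; [apply (re_le_Cmod (Cminus (u, v) (x, y))) | exact Hw]).
  assert (Hv : Rabs (v - y) < Rmin d1 d2)
    by (eapply Rle_lt_trans; [apply (im_le_Cmod (Cminus (u, v) (x, y))) | exact Hw]).
  specialize (H1 u v (Rlt_le_trans _ _ _ Hu (Rmin_l _ _)) (Rlt_le_trans _ _ _ Hv (Rmin_l _ _))).
  specialize (H2 u v (Rlt_le_trans _ _ _ Hu (Rmin_r _ _)) (Rlt_le_trans _ _ _ Hv (Rmin_r _ _))).
  replace (Cmod (Cminus (u, v) (x, y))) with (sqrt ((u - x) ^ 2 + (v - y) ^ 2))
    by (unfold Cmod; simpl; f_equal; ring).
  set (dist := sqrt ((u - x) ^ 2 + (v - y) ^ 2)) in *.
  eapply Rle_trans; [apply Cmod_le_abs_Re_Im |].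
  unfold cexp; simpl.
  match goal with |- Rabs ?A + Rabs ?B <= _ =>
    replace A with (exp u * cos v - exp x * cos y
      - ((u - x) * (exp x * cos y) + (v - y) * - (exp x * sin y))) by ring;
    replace B with (exp u * sin v - exp x * sin y
      - ((u - x) * (exp x * sin y) + (v - y) * (exp x * cos y))) by ring
  end.
  lra.
Qed.

Section Holomorphy.

Variable U : C -> Prop.

Definition Cderive_on (f f' : C -> C) : Prop := forall z, U z -> is_Cderive f z (f' z).

(* Differentiating under the integral sign needs a jointly continuous derivative; asking the
   derivative to be differentiable in turn provides it. *)
Definition twice_Cdiff_on (f : C -> C) : Prop :=
  exists f' f'', Cderive_on f f' /\ Cderive_on f' f''.

Lemma Cderive_on_ext f g f' : (forall w, f w = g w) -> Cderive_on f f' -> Cderive_on g f'.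
Proof. intros E H z Hz. eapply is_Cderive_ext; eauto. Qed.

Lemma Cderive_on_const c : Cderive_on (fun _ => c) (fun _ => RtoC 0).
Proof. intros z _. apply is_Cderive_const. Qed.

Lemma Cderive_on_plus f g f' g' : Cderive_on f f' -> Cderive_on g g' ->
  Cderive_on (fun w => Cplus (f w) (g w)) (fun w => Cplus (f' w) (g' w)).
Proof. intros Hf Hg z Hz. apply is_Cderive_plus; auto. Qed.

Lemma Cderive_on_opp f f' : Cderive_on f f' ->
  Cderive_on (fun w => Copp (f w)) (fun w => Copp (f' w)).
Proof. intros Hf z Hz. apply is_Cderive_opp; auto. Qed.

Lemma Cderive_on_mult f g f' g' : Cderive_on f f' -> Cderive_on g g' ->
  Cderive_on (fun w => Cmult (f w) (g w)) (fun w => Cplus (Cmult (f' w) (g w)) (Cmult (f w) (g' w))).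
Proof. intros Hf Hg z Hz. apply is_Cderive_mult; auto. Qed.

Lemma Cderive_on_inv f f' : Cderive_on f f' -> (forall z, U z -> f z <> RtoC 0) ->
  Cderive_on (fun w => Cinv (f w)) (fun w => Copp (Cmult (f' w) (Cinv (Cmult (f w) (f w))))).
Proof.
  intros Hf Hn z Hz.
  eapply is_Cderive_eq; [apply (is_Cderive_comp Cinv f); [apply is_Cderive_inv |]; auto | ring].
Qed.

Lemma Cderive_on_cexp c : Cderive_on (fun w => cexp (Cmult c w)) (fun w => Cmult c (cexp (Cmult c w))).
Proof.
  intros z _. apply (is_Cderive_comp cexp (fun w => Cmult c w)); [apply is_Cderive_cexp |].
  eapply is_Cderive_eq;
    [apply (is_Cderive_mult (fun _ => c) (fun w => w)); [apply is_Cderive_const | apply is_Cderive_id] | ring].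
Qed.

Lemma twice_Cdiff_on_ext f g : (forall w, f w = g w) -> twice_Cdiff_on f -> twice_Cdiff_on g.
Proof.
  intros E (f' & f'' & H1 & H2). exists f', f''.
  split; [apply (Cderive_on_ext f) |]; assumption.
Qed.

Lemma twice_Cdiff_on_const c : twice_Cdiff_on (fun _ => c).
Proof. exists (fun _ => RtoC 0), (fun _ => RtoC 0). split; apply Cderive_on_const. Qed.

Lemma twice_Cdiff_on_plus f g : twice_Cdiff_on f -> twice_Cdiff_on g ->
  twice_Cdiff_on (fun w => Cplus (f w) (g w)).
Proof.
  intros (f' & f'' & Hf1 & Hf2) (g' & g'' & Hg1 & Hg2).
  eexists _, _. split; [apply (Cderive_on_plus f g) | apply (Cderive_on_plus f' g')]; eassumption.
Qed.

Lemma twice_Cdiff_on_mult f g : twice_Cdiff_on f -> twice_Cdiff_on g ->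
  twice_Cdiff_on (fun w => Cmult (f w) (g w)).
Proof.
  intros (f' & f'' & Hf1 & Hf2) (g' & g'' & Hg1 & Hg2).
  eexists _, _. split; [apply (Cderive_on_mult f g); eassumption |].
  apply (Cderive_on_plus (fun w => Cmult (f' w) (g w)) (fun w => Cmult (f w) (g' w)));
    apply Cderive_on_mult; eassumption.
Qed.

Lemma twice_Cdiff_on_inv f : twice_Cdiff_on f -> (forall z, U z -> f z <> RtoC 0) ->
  twice_Cdiff_on (fun w => Cinv (f w)).
Proof.
  intros (f' & f'' & Hf1 & Hf2) Hn.
  eexists _, _. split; [apply (Cderive_on_inv f); eassumption |].
  apply (Cderive_on_opp (fun w => Cmult (f' w) (Cinv (Cmult (f w) (f w))))).
  apply (Cderive_on_mult f' (fun w => Cinv (Cmult (f w) (f w)))); [eassumption |].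
  apply (Cderive_on_inv (fun w => Cmult (f w) (f w))).
  - apply (Cderive_on_mult f f); eassumption.
  - intros z Hz. apply Cmult_neq_0; auto.
Qed.

Lemma twice_Cdiff_on_cexp c : twice_Cdiff_on (fun w => cexp (Cmult c w)).
Proof.
  exists (fun w => Cmult c (cexp (Cmult c w))).
  eexists. split; [apply Cderive_on_cexp |].
  apply (Cderive_on_mult (fun _ => c) (fun w => cexp (Cmult c w)));
    [apply Cderive_on_const | apply Cderive_on_cexp].
Qed.

Lemma twice_Cdiff_on_pow f n : twice_Cdiff_on f ->
  twice_Cdiff_on (fun w => pow_n (K := C_Ring) (f w) n).
Proof.
  intros H. induction n as [| n IH].
  { apply (twice_Cdiff_on_ext (fun _ => RtoC 1)); [reflexivity | apply twice_Cdiff_on_const]. }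
  apply (twice_Cdiff_on_ext (fun w => Cmult (f w) (pow_n (K := C_Ring) (f w) n))); [reflexivity |].
  apply (twice_Cdiff_on_mult f (fun w => pow_n (K := C_Ring) (f w) n)); assumption.
Qed.

Lemma twice_Cdiff_on_sum_n (F : nat -> C -> C) N : (forall j, twice_Cdiff_on (F j)) ->
  twice_Cdiff_on (fun w => sum_n (fun j => F j w) N).
Proof.
  intros H. induction N as [| N IH].
  - apply (twice_Cdiff_on_ext (F 0%nat)); [intros w; now rewrite sum_O | apply H].
  - apply (twice_Cdiff_on_ext (fun w => Cplus (sum_n (fun j => F j w) N) (F (S N) w))).
    + intros w. now rewrite sum_Sn.
    + apply (twice_Cdiff_on_plus (fun w => sum_n (fun j => F j w) N) (F (S N))); auto.
Qed.

End Holomorphy.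

Lemma Cderive_on_subset (U V : C -> Prop) f f' : (forall z, V z -> U z) ->
  Cderive_on U f f' -> Cderive_on V f f'.
Proof. intros HVU Hf z Hz. apply Hf, HVU, Hz. Qed.

(** * Integrals over a period *)

Lemma continuity_2d_pt_Im_swap g z l : is_Cderive g z l ->
  continuity_2d_pt (fun u v => Im (g (v, u))) (Im z) (Re z).
Proof.
  destruct z as [x y]. intros H [eps Heps].
  destruct (is_Cderive_continuous g (x, y) l H eps Heps) as [d [Hd Hc]].
  exists (mkposreal (d / 2) ltac:(lra)). simpl. intros u v Hu Hv.
  eapply Rle_lt_trans; [apply (im_le_Cmod (Cminus (g (v, u)) (g (x, y)))) | apply Hc].
  eapply Rle_lt_trans; [apply Cmod_le_abs_Re_Im |]. simpl. unfold Rminus in Hu, Hv. lra.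
Qed.

Lemma ex_RInt_Re_of_Cderive g e a b :
  (forall t, exists l, is_Cderive g (t, e) l) -> ex_RInt (fun t => Re (g (t, e))) a b.
Proof.
  intros H. apply (@ex_RInt_continuous R_CompleteNormedModule). intros t _.
  apply (@ex_derive_continuous R_AbsRing R_NormedModule).
  destruct (H t) as [l Hl]. eexists. apply (is_Cderive_partial_x g t e l Hl).
Qed.

(* Cauchy-Riemann: d/de Re g(t + ie) = - d/dt Im g(t + ie), whose integral over a period is 0. *)
Lemma is_derive_period_integral_Re g g' g'' a b e0 del : 0 < del ->
  Cderive_on (fun z => Rabs (Im z - e0) < del) g g' ->
  Cderive_on (fun z => Rabs (Im z - e0) < del) g' g'' ->
  (forall e, g (b, e) = g (a, e)) ->
  is_derive (fun e => RInt (fun t => Re (g (t, e))) a b) e0 0.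
Proof.
  intros Hdel Hg Hg' Hper.
  assert (Hstrip : forall t, Rabs (Im (t, e0) - e0) < del)
    by (intros t; simpl; rewrite Rminus_diag, Rabs_R0; exact Hdel).
  assert (Hpartial : forall t u, Rabs (u - e0) < del ->
    Derive (fun s => Re (g (t, s))) u = - Im (g' (t, u))).
  { intros t u Hu. apply is_derive_unique, (is_Cderive_partial_y g t u), Hg, Hu. }
  assert (Hint : RInt (fun t => Derive (fun u => Re (g (t, u))) e0) a b = 0).
  { assert (HFTC : is_RInt (fun t => - Im (g' (t, e0))) a b
      (minus (- Im (g (b, e0))) (- Im (g (a, e0))))).
    { apply (is_RInt_derive (fun s => - Im (g (s, e0)))).
      - intros t _. apply (@is_derive_opp R_AbsRing R_NormedModule (fun s => Im (g (s, e0)))).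
        apply (is_Cderive_partial_x g t e0), Hg, Hstrip.
      - intros t _. apply (@ex_derive_continuous R_AbsRing R_NormedModule). eexists.
        apply (@is_derive_opp R_AbsRing R_NormedModule (fun s => Im (g' (s, e0)))).
        apply (is_Cderive_partial_x g' t e0), Hg', Hstrip. }
    rewrite Hper in HFTC.
    rewrite (RInt_ext _ (fun t => - Im (g' (t, e0)))), (is_RInt_unique _ _ _ _ HFTC).
    - unfold minus, plus, opp; simpl. ring.
    - intros t _. apply Hpartial. rewrite Rminus_diag, Rabs_R0; exact Hdel. }
  rewrite <- Hint. apply is_derive_RInt_param.
  - exists (mkposreal del Hdel). intros u Hu t _. eexists.
    apply (is_Cderive_partial_y g t u), Hg, Hu.
  - intros t _. apply (continuity_2d_pt_ext_loc (fun u v => - Im (g' (v, u)))).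
    + exists (mkposreal del Hdel). intros u v Hu _. symmetry. apply Hpartial, Hu.
    + apply continuity_2d_pt_opp.
      apply (continuity_2d_pt_Im_swap g' (t, e0) (g'' (t, e0))), Hg', Hstrip.
  - exists (mkposreal del Hdel). intros u Hu.
    apply ex_RInt_Re_of_Cderive. intros t. eexists. apply Hg, Hu.
Qed.

Lemma eq_of_is_derive_0_same_sign (F : R -> R) : (forall e, e <> 0 -> is_derive F e 0) ->
  forall e1 e2, 0 < e1 * e2 -> F e1 = F e2.
Proof.
  intros HF.
  assert (Hlt : forall e1 e2, e1 < e2 -> 0 < e1 * e2 -> F e1 = F e2).
  { intros e1 e2 Hlt Hp. apply (@eq_is_derive R_NormedModule); [| exact Hlt].
    intros t [H1 H2]. apply HF. intros ->.
    destruct (Rlt_or_le 0 e1), (Rlt_or_le e2 0); nra. }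
  intros e1 e2 Hp. destruct (Rtotal_order e1 e2) as [H | [-> | H]].
  - apply Hlt; assumption.
  - reflexivity.
  - symmetry. apply Hlt; [assumption | lra].
Qed.

Lemma eq_0_of_abs_le_eps x : (forall eps, 0 < eps -> Rabs x <= eps) -> x = 0.
Proof.
  intros H. destruct (Req_dec x 0) as [| Hx]; [assumption |].
  assert (Hax : 0 < Rabs x) by (apply Rabs_pos_lt, Hx).
  specialize (H (Rabs x / 2)). lra.
Qed.

Lemma same_sign_beyond e M : e <> 0 -> exists m, 0 < e * m /\ M <= Rabs m.
Proof.
  intros He. assert (HM := Rle_abs M). assert (HM0 := Rabs_pos M).
  destruct (Rdichotomy _ _ He); [exists (- (Rabs M + 1)) | exists (Rabs M + 1)].
  - rewrite Rabs_Ropp, (Rabs_pos_eq (Rabs M + 1)) by lra. split; nra.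
  - rewrite (Rabs_pos_eq (Rabs M + 1)) by lra. split; nra.
Qed.

Lemma period_integral_Re_vanishes g a b : a <= b ->
  twice_Cdiff_on (fun z => Im z <> 0) g ->
  (forall e, g (b, e) = g (a, e)) ->
  (forall eps, 0 < eps -> exists M, forall t e, M <= Rabs e -> Cmod (g (t, e)) <= eps) ->
  forall e, e <> 0 -> RInt (fun t => Re (g (t, e))) a b = 0.
Proof.
  intros Hab (g' & g'' & Hg & Hg') Hper Hdecay e He.
  assert (Hstrip : forall e0 z, Rabs (Im z - e0) < Rabs e0 -> Im z <> 0).
  { intros e0 z Hz E. rewrite E, Rminus_0_l, Rabs_Ropp in Hz. lra. }
  assert (Hconst : forall e1, 0 < e * e1 ->
    RInt (fun t => Re (g (t, e))) a b = RInt (fun t => Re (g (t, e1))) a b).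
  { apply (eq_of_is_derive_0_same_sign (fun e => RInt (fun t => Re (g (t, e))) a b)).
    intros e0 He0.
    apply (is_derive_period_integral_Re g g' g'' a b e0 (Rabs e0)); [apply Rabs_pos_lt, He0 | | |].
    - apply (Cderive_on_subset _ _ _ _ (Hstrip e0) Hg).
    - apply (Cderive_on_subset _ _ _ _ (Hstrip e0) Hg').
    - exact Hper. }
  apply eq_0_of_abs_le_eps. intros eps Heps.
  destruct (Hdecay (eps / (b - a + 1))) as [M HM]; [apply Rdiv_lt_0_compat; lra |].
  destruct (same_sign_beyond e M He) as (m & Hem & Hm).
  rewrite (Hconst m Hem).
  eapply Rle_trans; [apply abs_RInt_le_const; [exact Hab | | intros t _; eapply Rle_trans;
    [apply re_le_Cmod | apply (HM t m Hm)]] |].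
  - apply ex_RInt_Re_of_Cderive. intros t. eexists. apply Hg. simpl. intros E.
    rewrite E in Hem. lra.
  - replace ((b - a) * (eps / (b - a + 1))) with (eps * ((b - a) / (b - a + 1))) by (field; lra).
    assert ((b - a) / (b - a + 1) <= 1).
    { apply (Rmult_le_reg_r (b - a + 1)); [lra |]. unfold Rdiv.
      rewrite Rmult_assoc, Rinv_l; lra. }
    nra.
Qed.

Lemma period_integral_vanishes g a b : a <= b ->
  twice_Cdiff_on (fun z => Im z <> 0) g ->
  (forall e, g (b, e) = g (a, e)) ->
  (forall eps, 0 < eps -> exists M, forall t e, M <= Rabs e -> Cmod (g (t, e)) <= eps) ->
  forall e, e <> 0 -> CRInt (fun t => g (t, e)) a b = RtoC 0.
Proof.
  intros Hab Hg Hper Hdecay e He. unfold CRInt.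
  rewrite (period_integral_Re_vanishes g a b Hab Hg Hper Hdecay e He).
  set (mi := Copp Ci).
  rewrite (RInt_ext _ (fun t => Re (Cmult mi (g (t, e))))).
  2:{ intros t _. unfold mi. destruct (g (t, e)); simpl. ring. }
  rewrite (period_integral_Re_vanishes (fun z => Cmult mi (g z)) a b Hab); [reflexivity | | | | exact He].
  - apply (twice_Cdiff_on_mult _ (fun _ => mi) g); [apply twice_Cdiff_on_const | exact Hg].
  - intros e'. now rewrite Hper.
  - intros eps Heps. destruct (Hdecay eps Heps) as [M HM]. exists M. intros t e' He'.
    unfold mi. rewrite Cmod_mult, Cmod_opp, Cmod_Ci, Rmult_1_l. apply HM, He'.
Qed.

(** * Trigonometric polynomials *)

Lemma ccos_cexp w : ccos w = Cmult (RtoC (1 / 2)) (Cplus (cexp (Cmult Ci w)) (cexp (Cmult (Copp Ci) w))).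
Proof.
  destruct w as [x y]. unfold ccos, cexp, cosh, sinh; simpl.
  replace (0 * x - 1 * y) with (- y) by ring. replace (0 * y + 1 * x) with x by ring.
  replace (- 0 * x - - (1) * y) with y by ring. replace (- 0 * y + - (1) * x) with (- x) by ring.
  rewrite cos_neg, sin_neg. apply injective_projections; simpl; field.
Qed.

Lemma csin_cexp w :
  csin w = Cmult (0, - 1 / 2) (Cminus (cexp (Cmult Ci w)) (cexp (Cmult (Copp Ci) w))).
Proof.
  destruct w as [x y]. unfold csin, cexp, cosh, sinh; simpl.
  replace (0 * x - 1 * y) with (- y) by ring. replace (0 * y + 1 * x) with x by ring.
  replace (- 0 * x - - (1) * y) with y by ring. replace (- 0 * y + - (1) * x) with (- x) by ring.
  rewrite cos_neg, sin_neg. apply injective_projections; simpl; field.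
Qed.

Section TrigHolomorphy.

Variable U : C -> Prop.

Lemma twice_Cdiff_on_ccos c : twice_Cdiff_on U (fun w => ccos (Cmult c w)).
Proof.
  apply (twice_Cdiff_on_ext U (fun w => Cmult (RtoC (1 / 2))
    (Cplus (cexp (Cmult (Cmult Ci c) w)) (cexp (Cmult (Cmult (Copp Ci) c) w))))).
  { intros w. now rewrite ccos_cexp, !Cmult_assoc. }
  apply (twice_Cdiff_on_mult U (fun _ => _)); [apply twice_Cdiff_on_const |].
  apply (twice_Cdiff_on_plus U (fun w => cexp (Cmult _ w)) (fun w => cexp (Cmult _ w)));
    apply twice_Cdiff_on_cexp.
Qed.

Lemma twice_Cdiff_on_csin c : twice_Cdiff_on U (fun w => csin (Cmult c w)).
Proof.
  apply (twice_Cdiff_on_ext U (fun w => Cmult (0, - 1 / 2)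
    (Cplus (cexp (Cmult (Cmult Ci c) w))
      (Cmult (RtoC (- 1)) (cexp (Cmult (Cmult (Copp Ci) c) w)))))).
  { intros w. rewrite csin_cexp, !Cmult_assoc. f_equal. ring. }
  apply (twice_Cdiff_on_mult U (fun _ => _)); [apply twice_Cdiff_on_const |].
  apply (twice_Cdiff_on_plus U (fun w => cexp (Cmult _ w))); [apply twice_Cdiff_on_cexp |].
  apply (twice_Cdiff_on_mult U (fun _ => _) (fun w => cexp (Cmult _ w)));
    [apply twice_Cdiff_on_const | apply twice_Cdiff_on_cexp].
Qed.

Lemma twice_Cdiff_on_trig_eval N a b : twice_Cdiff_on U (trig_eval N a b).
Proof.
  apply (twice_Cdiff_on_sum_n U (fun j z => Cplus (Cmult (RtoC (a j)) (ccos (Cmult (RtoC (INR j)) z)))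
    (Cmult (RtoC (b j)) (csin (Cmult (RtoC (INR j)) z))))).
  intros j.
  apply (twice_Cdiff_on_plus U (fun z => Cmult (RtoC (a j)) (ccos (Cmult (RtoC (INR j)) z)))
    (fun z => Cmult (RtoC (b j)) (csin (Cmult (RtoC (INR j)) z)))).
  - apply (twice_Cdiff_on_mult U (fun _ => _) (fun z => ccos (Cmult _ z)));
      [apply twice_Cdiff_on_const | apply twice_Cdiff_on_ccos].
  - apply (twice_Cdiff_on_mult U (fun _ => _) (fun z => csin (Cmult _ z)));
      [apply twice_Cdiff_on_const | apply twice_Cdiff_on_csin].
Qed.

End TrigHolomorphy.

Lemma trig_eval_periodic N a b e : trig_eval N a b (2 * PI, e) = trig_eval N a b (0, e).
Proof.
  unfold trig_eval. apply sum_n_ext. intros j.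
  assert (Hre : Re (Cmult (RtoC (INR j)) (2 * PI, e)) = Re (Cmult (RtoC (INR j)) (0, e)) + 2 * INR j * PI)
    by (simpl; ring).
  assert (Him : Im (Cmult (RtoC (INR j)) (2 * PI, e)) = Im (Cmult (RtoC (INR j)) (0, e)))
    by (simpl; ring).
  unfold ccos, csin. now rewrite Hre, Him, cos_period, sin_period.
Qed.

(** * Growth in the imaginary direction *)

Lemma exp_le_exp x y : x <= y -> exp x <= exp y.
Proof. intros [H | ->]; [left; apply exp_increasing, H | lra]. Qed.

Lemma Cmod_sum_n_le (F : nat -> C) N : Cmod (sum_n F N) <= sum_n (fun j => Cmod (F j)) N.
Proof.
  induction N as [| N IH]; rewrite !sum_O || rewrite !sum_Sn; [lra |].
  eapply Rle_trans; [apply Cmod_triangle |]. change (plus ?x ?y) with (x + y). lra.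
Qed.

Lemma sum_n_le (f g : nat -> R) N : (forall j, f j <= g j) -> sum_n f N <= sum_n g N.
Proof. intros H. rewrite !sum_n_Reals. apply sum_growing, H. Qed.

Lemma sum_n_nonneg (f : nat -> R) N : (forall j, 0 <= f j) -> 0 <= sum_n f N.
Proof. intros H. rewrite sum_n_Reals. apply cond_pos_sum, H. Qed.

Lemma sum_n_exp_weight_le (w : nat -> R) N y : (forall j, 0 <= w j) -> 0 <= y ->
  sum_n (fun j => w j * exp (INR j * y)) N <= sum_n w N * exp (INR N * y).
Proof.
  intros Hw Hy. induction N as [| N IH]; [rewrite !sum_O; lra |].
  rewrite !sum_Sn. change (plus ?x ?y) with (x + y).
  assert (exp (INR N * y) <= exp (INR (S N) * y)) by (apply exp_le_exp; rewrite S_INR; nra).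
  assert (0 <= sum_n w N) by (apply sum_n_nonneg, Hw).
  specialize (Hw (S N)). nra.
Qed.

Definition trig_term (a b : nat -> R) (j : nat) (z : C) : C :=
  Cplus (Cmult (RtoC (a j)) (ccos (Cmult (RtoC (INR j)) z)))
    (Cmult (RtoC (b j)) (csin (Cmult (RtoC (INR j)) z))).

Lemma trig_eval_sum_n N a b z : trig_eval N a b z = sum_n (fun j => trig_term a b j z) N.
Proof. reflexivity. Qed.

Lemma trig_eval_S N a b z :
  trig_eval (S N) a b z = Cplus (trig_eval N a b z) (trig_term a b (S N) z).
Proof. rewrite !trig_eval_sum_n. apply (sum_Sn (G := C_AbelianMonoid)). Qed.

Lemma trig_term_Re a b j t e :
  Re (trig_term a b j (t, e)) = cosh (INR j * e) * (a j * cos (INR j * t) + b j * sin (INR j * t)).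
Proof.
  unfold trig_term, ccos, csin; simpl.
  replace (INR j * t - 0 * e) with (INR j * t) by ring.
  replace (INR j * e + 0 * t) with (INR j * e) by ring. ring.
Qed.

Lemma trig_term_Im a b j t e :
  Im (trig_term a b j (t, e)) = sinh (INR j * e) * (b j * cos (INR j * t) - a j * sin (INR j * t)).
Proof.
  unfold trig_term, ccos, csin; simpl.
  replace (INR j * t - 0 * e) with (INR j * t) by ring.
  replace (INR j * e + 0 * t) with (INR j * e) by ring. ring.
Qed.

Lemma cosh_plus_abs_sinh y : cosh y + Rabs (sinh y) = exp (Rabs y).
Proof.
  unfold cosh, sinh. destruct (Rle_or_lt 0 y) as [Hy | Hy].
  - assert (exp (- y) <= exp y) by (apply exp_le_exp; lra).
    rewrite (Rabs_pos_eq y), Rabs_pos_eq by lra. lra.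
  - assert (exp y <= exp (- y)) by (apply exp_le_exp; lra).
    rewrite (Rabs_left y), Rabs_left1 by lra. lra.
Qed.

Lemma abs_sinh_ge y : (exp (Rabs y) - 1) / 2 <= Rabs (sinh y).
Proof.
  assert (Hc : cosh y <= (exp (Rabs y) + 1) / 2).
  { unfold cosh. destruct (Rle_or_lt 0 y) as [Hy | Hy].
    - rewrite Rabs_pos_eq by lra.
      assert (exp (- y) <= 1) by (rewrite <- exp_0; apply exp_le_exp; lra). lra.
    - rewrite Rabs_left by lra.
      assert (exp y <= 1) by (rewrite <- exp_0; apply exp_le_exp; lra). lra. }
  generalize (cosh_plus_abs_sinh y). lra.
Qed.

Lemma abs_lin_comb_le p q x y : Rabs x <= 1 -> Rabs y <= 1 -> Rabs (p * x + q * y) <= Rabs p + Rabs q.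
Proof.
  intros Hx Hy. eapply Rle_trans; [apply Rabs_triang |]. rewrite !Rabs_mult.
  generalize (Rabs_pos p) (Rabs_pos q); nra.
Qed.

Lemma trig_term_upper a b j t e :
  Cmod (trig_term a b j (t, e)) <= (Rabs (a j) + Rabs (b j)) * exp (INR j * Rabs e).
Proof.
  assert (Hcos : forall x, Rabs (cos x) <= 1) by (intros x; apply Rabs_le, COS_bound).
  assert (Hsin : forall x, Rabs (sin x) <= 1) by (intros x; apply Rabs_le, SIN_bound).
  set (x := INR j * t). set (y := INR j * e).
  assert (HP : Rabs (a j * cos x + b j * sin x) <= Rabs (a j) + Rabs (b j))
    by (apply abs_lin_comb_le; auto).
  assert (HQ : Rabs (b j * cos x - a j * sin x) <= Rabs (a j) + Rabs (b j)).
  { replace (b j * cos x - a j * sin x) with (a j * - sin x + b j * cos x) by ring.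
    apply abs_lin_comb_le; [rewrite Rabs_Ropp |]; auto. }
  replace (INR j * Rabs e) with (Rabs y) by (unfold y; rewrite Rabs_mult, (Rabs_pos_eq (INR j)) by
    apply pos_INR; reflexivity).
  rewrite <- cosh_plus_abs_sinh.
  eapply Rle_trans; [apply Cmod_le_abs_Re_Im |].
  rewrite trig_term_Re, trig_term_Im, !Rabs_mult. fold x y.
  assert (0 < cosh y) by (unfold cosh; generalize (exp_pos y) (exp_pos (- y)); lra).
  rewrite (Rabs_pos_eq (cosh y)) by lra.
  generalize (Rabs_pos (sinh y)); nra.
Qed.

(* |t_j|^2 = cosh^2 P^2 + sinh^2 Q^2 = sinh^2 (P^2 + Q^2) + P^2 with P^2 + Q^2 = a_j^2 + b_j^2 *)
Lemma trig_term_lower a b j t e :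
  sqrt (a j ^ 2 + b j ^ 2) * ((exp (INR j * Rabs e) - 1) / 2) <= Cmod (trig_term a b j (t, e)).
Proof.
  set (x := INR j * t). set (y := INR j * e).
  replace (INR j * Rabs e) with (Rabs y) by (unfold y; rewrite Rabs_mult, (Rabs_pos_eq (INR j)) by
    apply pos_INR; reflexivity).
  assert (Hsh := abs_sinh_ge y).
  assert (Hs0 : 0 <= sqrt (a j ^ 2 + b j ^ 2)) by apply sqrt_pos.
  apply Rle_trans with (Rabs (sinh y) * sqrt (a j ^ 2 + b j ^ 2)); [nra |].
  unfold Cmod. rewrite trig_term_Re, trig_term_Im. fold x y.
  rewrite <- (sqrt_Rsqr (Rabs _)) by apply Rabs_pos. rewrite <- sqrt_mult_alt by apply Rle_0_sqr.
  apply sqrt_le_1_alt. rewrite <- Rsqr_abs. unfold Rsqr.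
  set (P := a j * cos x + b j * sin x). set (Q := b j * cos x - a j * sin x).
  assert (HPQ : P ^ 2 + Q ^ 2 = a j ^ 2 + b j ^ 2).
  { assert (Hs := sin2_cos2 x). unfold Rsqr in Hs.
    replace (a j ^ 2 + b j ^ 2) with ((a j ^ 2 + b j ^ 2) * (sin x * sin x + cos x * cos x))
      by (rewrite Hs; ring).
    unfold P, Q. ring. }
  assert (Hch : cosh y ^ 2 = 1 + sinh y ^ 2).
  { assert (exp y * exp (- y) = 1) by (rewrite <- exp_plus, Rplus_opp_r, exp_0; reflexivity).
    unfold cosh, sinh. nra. }
  assert (E : (cosh y * P) ^ 2 + (sinh y * Q) ^ 2 = sinh y ^ 2 * (P ^ 2 + Q ^ 2) + P ^ 2).
  { replace ((cosh y * P) ^ 2) with (cosh y ^ 2 * P ^ 2) by ring. rewrite Hch. ring. }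
  rewrite E, HPQ. assert (0 <= P ^ 2) by apply pow2_ge_0. simpl. nra.
Qed.

Lemma trig_eval_upper N a b t e :
  Cmod (trig_eval N a b (t, e)) <= sum_n (fun j => Rabs (a j) + Rabs (b j)) N * exp (INR N * Rabs e).
Proof.
  rewrite trig_eval_sum_n. eapply Rle_trans; [apply Cmod_sum_n_le |].
  eapply Rle_trans; [apply sum_n_le; intros j; apply trig_term_upper |].
  apply sum_n_exp_weight_le; [intros j; generalize (Rabs_pos (a j)) (Rabs_pos (b j)); lra | apply Rabs_pos].
Qed.

Lemma trig_eval_lower a b k t e :
  exp (INR k * Rabs e) * (sqrt (a (S k) ^ 2 + b (S k) ^ 2) * ((exp (Rabs e) - 1) / 2)
    - sum_n (fun j => Rabs (a j) + Rabs (b j)) k)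
  <= Cmod (trig_eval (S k) a b (t, e)).
Proof.
  set (Y := exp (INR k * Rabs e)). set (X := exp (Rabs e)).
  set (c0 := sqrt (a (S k) ^ 2 + b (S k) ^ 2)).
  assert (HY : 1 <= Y) by (unfold Y; rewrite <- exp_0; apply exp_le_exp;
    generalize (pos_INR k) (Rabs_pos e); nra).
  assert (HX : 1 <= X) by (unfold X; rewrite <- exp_0; apply exp_le_exp, Rabs_pos).
  assert (Hc0 : 0 <= c0) by apply sqrt_pos.
  assert (Htop := trig_term_lower a b (S k) t e).
  rewrite S_INR, Rmult_plus_distr_r, Rmult_1_l, exp_plus in Htop. fold Y X c0 in Htop.
  assert (Hrest := trig_eval_upper k a b t e). fold Y in Hrest.
  assert (Htri := Cmod_triangle (trig_eval (S k) a b (t, e)) (Copp (trig_eval k a b (t, e)))).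
  replace (Cplus (trig_eval (S k) a b (t, e)) (Copp (trig_eval k a b (t, e))))
    with (trig_term a b (S k) (t, e)) in Htri
    by (rewrite trig_eval_S; ring).
  rewrite Cmod_opp in Htri.
  assert (c0 * ((X - 1) / 2) * Y <= c0 * ((Y * X - 1) / 2)) by nra.
  nra.
Qed.

Lemma Cmod_div_le u v eps A L : 0 < eps -> 0 < L -> Cmod u <= A -> A <= eps * L -> L <= Cmod v ->
  Cmod (Cdiv u v) <= eps.
Proof.
  intros Heps HL Hu HA Hv.
  assert (Hv0 : v <> RtoC 0) by (intros ->; rewrite Cmod_0 in Hv; lra).
  rewrite Cmod_div by exact Hv0.
  apply (Rmult_le_reg_r (Cmod v)); [lra |].
  unfold Rdiv. rewrite Rmult_assoc, Rinv_l, Rmult_1_r by lra.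
  assert (eps * L <= eps * Cmod v) by (apply Rmult_le_compat_l; lra). lra.
Qed.

Lemma trig_ratio_decay a b c d k : is_trig_deg a b k ->
  (forall j, (k <= j)%nat -> c j = 0 /\ d j = 0) ->
  forall eps, 0 < eps -> exists M, forall t e, M <= Rabs e ->
    Cmod (Cdiv (trig_eval k c d (t, e)) (trig_eval k a b (t, e))) <= eps.
Proof.
  intros [Hab _] Hcd eps Heps. destruct k as [| k].
  { exists 0. intros t e _. destruct (Hcd 0%nat (le_n 0)) as [Hc Hd].
    unfold trig_eval, Cdiv. rewrite sum_O, Hc, Hd, !Cmult_0_l, Cplus_0_l, Cmult_0_l, Cmod_0. lra. }
  set (A := sum_n (fun j => Rabs (c j) + Rabs (d j)) k).
  set (B := sum_n (fun j => Rabs (a j) + Rabs (b j)) k).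
  set (c0 := sqrt (a (S k) ^ 2 + b (S k) ^ 2)).
  assert (HA : 0 <= A) by (apply sum_n_nonneg; intros j; generalize (Rabs_pos (c j)) (Rabs_pos (d j)); lra).
  assert (Hc0 : 0 < c0).
  { apply sqrt_lt_R0. destruct Hab as [H | H]; generalize (pow2_ge_0 (a (S k))) (pow2_ge_0 (b (S k)));
      [assert (0 < a (S k) ^ 2) by (apply pow2_gt_0, H) | assert (0 < b (S k) ^ 2) by (apply pow2_gt_0, H)];
      lra. }
  exists (2 * (A / eps + B) / c0 + 1). intros t e He.
  set (Y := exp (INR k * Rabs e)).
  assert (HY : 1 <= Y) by (unfold Y; rewrite <- exp_0; apply exp_le_exp;
    generalize (pos_INR k) (Rabs_pos e); nra).
  assert (Hnum : Cmod (trig_eval (S k) c d (t, e)) <= A * Y).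
  { destruct (Hcd (S k) (le_n _)) as [Hc Hd].
    replace (trig_eval (S k) c d (t, e)) with (trig_eval k c d (t, e)) by
      (rewrite trig_eval_S; unfold trig_term; rewrite Hc, Hd; ring).
    apply trig_eval_upper. }
  assert (Hden := trig_eval_lower a b k t e). fold Y c0 B in Hden.
  assert (HL : A / eps + c0 / 2 <= c0 * ((exp (Rabs e) - 1) / 2) - B).
  { assert (Hexp := exp_ineq1_le (Rabs e)).
    assert (H2 : 2 * (A / eps + B) / c0 * c0 = 2 * (A / eps + B)) by (field; lra).
    assert ((2 * (A / eps + B) / c0 + 1) * c0 <= Rabs e * c0) by (apply Rmult_le_compat_r; lra).
    nra. }
  assert (HAe : eps * (A / eps) = A) by (field; lra).
  assert (0 <= A / eps) by (apply Rle_mult_inv_pos; lra).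
  set (L := c0 * ((exp (Rabs e) - 1) / 2) - B) in *.
  apply (Cmod_div_le _ _ eps (A * Y) (Y * L)); [lra | nra | exact Hnum | | exact Hden].
  assert (A / eps * Y <= L * Y) by (apply Rmult_le_compat_r; lra).
  nra.
Qed.

Lemma Cmod_pow_n_le c eps n : (1 <= n)%nat -> Cmod c <= Rmin eps 1 ->
  Cmod (pow_n (K := C_Ring) c n) <= eps.
Proof.
  intros Hn Hc. assert (Hc0 := Cmod_ge_0 c).
  assert (Hc1 : Cmod c <= 1) by (eapply Rle_trans; [exact Hc | apply Rmin_r]).
  assert (Hce : Cmod c <= eps) by (eapply Rle_trans; [exact Hc | apply Rmin_l]).
  replace (pow_n (K := C_Ring) c n) with (Cpow c n)
    by (clear Hn; induction n; simpl; auto).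
  rewrite Cmod_pow. destruct n as [| n]; [lia |]. simpl.
  assert (Cmod c ^ n <= 1) by (rewrite <- (pow1 n); apply pow_incr; lra).
  assert (0 <= Cmod c ^ n) by (apply pow_le, Hc0).
  nra.
Qed.

Lemma filterlim_at_right_const_0 (F : R -> C) : (forall eta, 0 < eta -> F eta = RtoC 0) ->
  filterlim F (at_right 0) (locally (RtoC 0)).
Proof.
  intros H. apply (filterlim_ext_loc (fun _ => RtoC 0)); [| apply filterlim_const].
  exists (mkposreal 1 Rlt_0_1). intros y _ Hy. symmetry. apply H, Hy.
Qed.

Theorem lemma6 (a b c d : nat -> R) (k n : nat) :
  is_trig_deg a b k ->
  (forall j, (k <= j)%nat -> c j = 0 /\ d j = 0) ->
  (forall z : C, trig_eval k a b z = RtoC 0 -> Im z = 0) ->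
  (1 <= n)%nat ->
  let r := fun z : C => Cdiv (trig_eval k c d z) (trig_eval k a b z) in
  exists Lp Lm : C,
    filterlim (fun eta => CRInt (fun phi => pow_n (r (phi, eta)) n) 0 (2 * PI))
      (at_right 0) (locally Lp) /\
    filterlim (fun eta => CRInt (fun phi => pow_n (r (phi, - eta)) n) 0 (2 * PI))
      (at_right 0) (locally Lm) /\
    Cplus (Cmult (RtoC (1/2)) Lp) (Cmult (RtoC (1/2)) Lm) = RtoC 0.
Proof.
  intros Hdeg Hcd Hroots Hn r.
  assert (Hzero : forall e, e <> 0 ->
    CRInt (fun phi => pow_n (K := C_Ring) (r (phi, e)) n) 0 (2 * PI) = RtoC 0).
  { apply (period_integral_vanishes (fun z => pow_n (K := C_Ring) (r z) n)).
    - generalize PI_RGT_0. lra.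
    - apply twice_Cdiff_on_pow, (twice_Cdiff_on_mult _ (trig_eval k c d) (fun z => Cinv (trig_eval k a b z))).
      + apply twice_Cdiff_on_trig_eval.
      + apply twice_Cdiff_on_inv; [apply twice_Cdiff_on_trig_eval |].
        intros z Hz E. apply Hz, Hroots, E.
    - intros e. unfold r. now rewrite !trig_eval_periodic.
    - intros eps Heps.
      destruct (trig_ratio_decay a b c d k Hdeg Hcd (Rmin eps 1)) as [M HM]; [apply Rmin_pos; lra |].
      exists M. intros t e He. apply Cmod_pow_n_le; [exact Hn |]. unfold r. apply HM, He. }
  exists (RtoC 0), (RtoC 0). split; [| split].
  - apply filterlim_at_right_const_0. intros eta Heta. apply Hzero. lra.
  - apply filterlim_at_right_const_0. intros eta Heta. apply Hzero. lra.
  - rewrite Cmult_0_r. apply Cplus_0_l.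
Qed.
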